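(* Let $v\in\mathrm{Box}(\Sigma_+)$, $t\in\mathcal I(y^v)$, and let $l\in\mathbb L$ be such that $p(l)\in p(\mathcal S^{es}_+(\gamma^v))=p(\mathcal S^{es}_-(\gamma^v(t)))$, where $p:\mathbb L\to\mathbb L/\langle h\rangle$ is the projection. Then for $m\in\mathbb Z$: $mh+l\in\mathcal S^{es}_+(\gamma^v)$ if and only if $m\ge m_+(l)$, and $mh+l\in\mathcal S^{es}_-(\gamma^v(t))$ if and only if $m\le m_{-,t}(l)$.
   Context: $N\cong\mathbb Z^d$ lattice, $\mathcal A=\{v_1,\dots,v_n\}\subset N$ generating $N$ with a homomorphism $\mathrm h:N\to\mathbb Z$, $\mathrm h(v_j)=1$; $\mathbb L=\{l\in\mathbb Z^n:\sum l_jv_j=0\}$; fix $\beta\in N$. $\Sigma_\pm$ are the fans supported on $\mathbb R_{\ge0}\mathrm{Conv}(\mathcal A)$ of two regular triangulations with vertices in $\mathcal A$ joined by an edge of the secondary polytope; there is a circuit $I$ with primitive relation $h\in\mathbb L$, $I_\pm=\{v_j:\pm h_j>0\}$, such that (with $\mathcal F\subset\mathcal A\setminus I$ separating if $\mathcal F\cup(I\setminus\{v\})$ generates a maximal cone of $\Sigma_\pm$ for all $v\in I_\pm$) $\Sigma_-$ arises from $\Sigma_+$ by replacing the maximal cones $\mathcal F\cup(I\setminus\{v\})$, $v\in I_+$, by $\mathcal F\cup(I\setminus\{v\})$, $v\in I_-$; these are the essential maximal cones of $\Sigma_\pm$. $\mathrm{Box}(\Sigma_+)$: $v=\sum q^v_jv_j\in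 N$, $0\le q^v_j<1$, $q^v_j=0$ unless $v_j$ spans a ray of a fixed maximal cone of $\Sigma_+$; $y^v_j=e^{2\pi iq^v_j}$. $\mathcal I(r)=\{t\in\mathbb C^*:r_jt^{h_j}=1$ for some $v_j\in I_-\}$. Choose $\gamma^v\in\mathbb Q^n$ with $e^{2\pi i\gamma^v_j}=y^v_j$, $\sum\gamma^v_jv_j=\beta$; for $t\in\mathcal I(y^v)$ fix $\theta_t\in\mathbb Q$ with $e^{2\pi i\theta_t}=t$ ($\theta_1=0$) and set $\gamma^v(t)=\gamma^v+\theta_th$. For $\gamma\in\mathbb Q^n$, $l\in\mathbb L$: $\mathrm{Supp}(l)=\{v_j:l_j+\gamma_j\notin\mathbb Z_{\ge0}\}$; $\mathcal S^{es}_\pm(\gamma)$ is the set of $l\in\mathbb L$ such that all elements of $\mathrm{Supp}(l)$ generate rays of one essential maximal cone of $\Sigma_\pm$. Define $m_+(l)=\min\{m\in\mathbb Z:mh_j+l_j+\gamma^v_j\in\mathbb Z_{\ge0}$ for some $j$ with $v_j\in I_+\}$ and $m_{-,t}(l)=\max\{m\in\mathbb Z:mh_j+l_j+\gamma^v_j(t)\in\mathbb Z_{\ge0}$ for some $j$ with $v_j\in I_-\}$ (these are well defined integers). *)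

From mathcomp Require Import all_boot all_order all_algebra.
Set Implicit Arguments. Unset Strict Implicit. Unset Printing Implicit Defensive.
Import Order.TTheory GRing.Theory Num.Theory.
Local Open Scope ring_scope.

(* The point configuration A = {v_1,...,v_n} in N = Z^d is encoded as
   v : 'I_n -> 'I_d -> int  (v j = the j-th vector, v j i its i-th coordinate).
   Cones of the fans are encoded by the index sets of their generators. *)
Section Defs.
Variables (d n : nat) (v : 'I_n -> 'I_d -> int).

Definition pairing (j : 'I_n) (psi : 'I_d -> rat) : rat :=
  \sum_(i < d) (v j i)%:~R * psi i.

Definition combQ (c : 'I_n -> rat) (i : 'I_d) : rat :=
  \sum_(j < n) c j * (v j i)%:~R.

Definition generates_lattice : Prop :=
  forall x : 'I_d -> int, exists c : 'I_n -> int,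
    forall i, x i = \sum_(j < n) c j * v j i.

Definition has_height_one : Prop :=
  exists w : 'I_d -> int, forall j, \sum_(i < d) v j i * w i = 1.

Definition in_L (l : 'I_n -> int) : Prop :=
  forall i : 'I_d, \sum_(j < n) l j * v j i = 0.

Definition lin_indep (S : {set 'I_n}) : Prop :=
  forall c : 'I_n -> rat, (forall j, j \notin S -> c j = 0) ->
    (forall i, combQ c i = 0) -> forall j, c j = 0.

(* Sigma (given by its maximal cones) is the fan over a regular triangulation
   of Conv(A) with vertices in A: there is a height function omega such that
   every lower face of the lifted configuration is a simplex, and the maximal
   cells are exactly the lower facets. *)
Definition regular_triangulation_fan (Sigma : {set {set 'I_n}}) : Prop :=
  exists omega : 'I_n -> rat,
    (forall psi : 'I_d -> rat, (forall j, pairing j psi <= omega j) ->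
        lin_indep [set j | pairing j psi == omega j]) /\
    (forall sigma : {set 'I_n}, sigma \in Sigma <->
        (#|sigma| = d /\
         exists psi : 'I_d -> rat, (forall j, pairing j psi <= omega j) /\
             sigma = [set j | pairing j psi == omega j])).

Definition is_circuit (I : {set 'I_n}) : Prop :=
  ~ lin_indep I /\ forall j, j \in I -> lin_indep (I :\ j).

Definition primitive_relation (I : {set 'I_n}) (h : 'I_n -> int) : Prop :=
  [/\ in_L h, (forall j, (h j != 0) = (j \in I)) &
      (forall (k : int) (h' : 'I_n -> int), (forall j, h j = k * h' j) -> `|k| = 1)].

Definition Ipos (h : 'I_n -> int) : {set 'I_n} := [set j | 0 < h j].
Definition Ineg (h : 'I_n -> int) : {set 'I_n} := [set j | h j < 0].

Definition separating (Sigmap : {set {set 'I_n}}) (I : {set 'I_n})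
    (h : 'I_n -> int) (F : {set 'I_n}) : Prop :=
  F :&: I = set0 /\ forall k, k \in Ipos h -> F :|: (I :\ k) \in Sigmap.

(* essential maximal cones: F u (I \ {v}), F separating, v in P
   (P = I_+ for Sigma_+, P = I_- for Sigma_-) *)
Definition essential (Sigmap : {set {set 'I_n}}) (I : {set 'I_n})
    (h : 'I_n -> int) (P : {set 'I_n}) (sigma : {set 'I_n}) : Prop :=
  exists F k, [/\ separating Sigmap I h F, k \in P & sigma = F :|: (I :\ k)].

Definition flip (Sigmap Sigmam : {set {set 'I_n}}) (I : {set 'I_n})
    (h : 'I_n -> int) : Prop :=
  forall sigma, sigma \in Sigmam <->
    ((sigma \in Sigmap /\ ~ essential Sigmap I h (Ipos h) sigma)
     \/ essential Sigmap I h (Ineg h) sigma).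

Definition Supp (gamma : 'I_n -> rat) (l : 'I_n -> int) : {set 'I_n} :=
  [set j | ~~ ((l j)%:~R + gamma j \is a Num.nat)].

Definition S_es (ess : {set 'I_n} -> Prop) (gamma : 'I_n -> rat)
    (l : 'I_n -> int) : Prop :=
  in_L l /\ exists sigma, ess sigma /\ Supp gamma l \subset sigma.

(* Box(Sigma_+), parametrised by the coefficient vector q = q^v:
   v = sum q_j v_j in N, 0 <= q_j < 1, q supported on a maximal cone. *)
Definition in_box (Sigmap : {set {set 'I_n}}) (q : 'I_n -> rat) : Prop :=
  [/\ forall j, 0 <= q j < 1,
      exists2 sigma, sigma \in Sigmap & forall j, j \notin sigma -> q j = 0 &
      forall i, combQ q i \is a Num.int].

End Defs.

Definition shift {n : nat} (m : int) (h l : 'I_n -> int) : 'I_n -> int :=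
  fun j => m * h j + l j.

Definition is_least (P : int -> Prop) (m : int) : Prop :=
  P m /\ forall m', P m' -> (m <= m')%R.
Definition is_greatest (P : int -> Prop) (m : int) : Prop :=
  P m /\ forall m', P m' -> (m' <= m)%R.

(* Since h vanishes off the circuit I, the shifts m h + l all have the same
   support outside I, and the hypothesis on p(l) provides a separating F
   containing it.  Hence m h + l lies in S^es_+ (resp. S^es_-) exactly when
   m h_j + l_j + gamma_j is a natural number for some j in I_+ (resp. I_-).
   For h_j > 0 this condition is upward closed in m and bounded below, so the
   set of such m is the ray [m_+(l), oo); replacing m by -m treats I_-. *)

From mathcomp Require Import all_boot all_order all_algebra.
From mathcomp Require Import zify ring.
Import Order.TTheory GRing.Theory Num.Theory.

Set Implicit Arguments.
Unset Strict Implicit.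
Unset Printing Implicit Defensive.
Local Open Scope ring_scope.

Lemma is_least_upclosed (P : int -> Prop) (b m0 : int) :
  (forall m, decidable (P m)) ->
  (forall m m', m <= m' -> P m -> P m') ->
  (forall m, P m -> b <= m) -> P m0 ->
  exists mp, is_least P mp /\ forall m, P m <-> mp <= m.
Proof.
move=> P_dec upP lbP.
suff least_below k : forall m, (m - b <= k%:Z) -> P m -> exists mp, is_least P mp.
  move=> Pm0; have [|mp [Pmp minP]] := least_below `|m0 - b|%N m0 _ Pm0.
    by have := lbP _ Pm0; lia.
  exists mp; split=> // m; split; first exact: minP.
  by move=> /upP; apply.
elim: k => [|k IHk] m lemk Pm.
  by exists m; split=> // m' /lbP; lia.
have [Pm1|nPm1] := P_dec (m - 1); first by apply: (IHk (m - 1)) => //; lia.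
exists m; split=> // m' Pm'; rewrite leNgt; apply/negP=> ltm'm.
by apply: nPm1; apply: (upP m') => //; lia.
Qed.

Lemma is_greatest_opp (P Q : int -> Prop) (mp : int) :
  (forall m, Q m <-> P (- m)) ->
  is_least P mp /\ (forall m, P m <-> mp <= m) ->
  is_greatest Q (- mp) /\ (forall m, Q m <-> m <= - mp).
Proof.
move=> QP [[Pmp minP] rayP]; split.
  by split=> [|m /QP/minP]; rewrite ?QP ?opprK // lerNr.
by move=> m; rewrite QP rayP lerNr.
Qed.

Section NaturalShifts.
Variables (a l : int) (g : rat).

Lemma natr_shift_le (m m' : int) : 0 <= a -> m <= m' ->
  (m * a + l)%:~R + g \is a Num.nat -> (m' * a + l)%:~R + g \is a Num.nat.
Proof.
move=> a_ge0 lemm' nat_m.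
have -> : (m' * a + l)%:~R + g = ((m * a + l)%:~R + g) + ((m' - m) * a)%:~R :> rat.
  by rewrite !intrD !intrM intrB; ring.
by rewrite rpredD // natrEint intr_int ler0z mulr_ge0 // subr_ge0.
Qed.

Lemma natr_shift_lbound (m : int) : 0 < a ->
  (m * a + l)%:~R + g \is a Num.nat -> - Num.ceil `|l%:~R + g| <= m.
Proof.
move=> a_gt0; set c := l%:~R + g; set b := Num.ceil `|c|.
rewrite natrEint intrD -addrA => /andP[_ mac_ge0].
have b_ge0 : 0 <= b by rewrite ceil_ge0 (lt_le_trans _ (normr_ge0 _)).
have [m_ge0|m_lt0] := leP 0 m; first by lia.
have : (- m)%:~R <= `|c| :> rat.
  have ma_le_m : (m * a)%:~R <= m%:~R :> rat by rewrite ler_int; nia.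
  have c_le : - `|c| <= - c by rewrite lerN2 ler_norm.
  rewrite rmorphN lerNl (le_trans c_le) // (le_trans _ ma_le_m) //.
  by rewrite -subr_ge0 opprK.
by move=> /le_trans/(_ (ceil_ge _)); rewrite ler_int lerNl.
Qed.

Lemma natr_shift_exists : 0 < a -> l%:~R + g \is a Num.int ->
  exists m : int, (m * a + l)%:~R + g \is a Num.nat.
Proof.
move=> a_gt0 /intrP[z eq_z]; exists `|z|%:Z.
by rewrite intrD -addrA eq_z -intrD natrEint intr_int ler0z; nia.
Qed.

End NaturalShifts.

Section HitsNat.
Variables (n : nat) (P : {set 'I_n}) (a l : 'I_n -> int) (g : 'I_n -> rat).

Definition hits_nat (m : int) : Prop :=
  exists2 j, j \in P & (m * a j + l j)%:~R + g j \is a Num.nat.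

Lemma hits_nat_ray (m0 : int) : {in P, forall j, 0 < a j} -> hits_nat m0 ->
  exists mp, is_least hits_nat mp /\ forall m, hits_nat m <-> mp <= m.
Proof.
move=> a_gt0; apply: (@is_least_upclosed hits_nat (- \sum_j Num.ceil `|(l j)%:~R + g j|) m0).
- by move=> m; apply: decP; apply: exists_inP.
- move=> m m' lemm' [j jP nat_j]; exists j => //.
  exact: natr_shift_le (ltW (a_gt0 j jP)) lemm' nat_j.
- move=> m [j jP /(natr_shift_lbound (a_gt0 j jP))]; apply: le_trans.
  rewrite lerN2 (bigD1 j) //= lerDl sumr_ge0 // => i _.
  by rewrite ceil_ge0 (lt_le_trans _ (normr_ge0 _)).
Qed.

End HitsNat.

Lemma hits_nat_opp (n : nat) (P : {set 'I_n}) (a l : 'I_n -> int) (g : 'I_n -> rat)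
    (m : int) :
  hits_nat P a l g m <-> hits_nat P (fun j => - a j) l g (- m).
Proof. by split=> -[j jP nat_j]; exists j; rewrite // mulrNN in nat_j *. Qed.

Lemma subset_setU_setD1 (T : finType) (S F I : {set T}) (k : T) :
  F :&: I = set0 -> k \in I ->
  (S \subset F :|: (I :\ k)) = (S :\: I \subset F) && (k \notin S).
Proof.
move=> FI0 kI; apply/subsetP/andP => [sub|[subF kS] j jS].
  split; first by apply/subsetP=> j /setDP[/sub]; rewrite !inE => /orP[|/andP[_ ->]].
  apply/negP=> /sub; rewrite !inE eqxx /= orbF => kF.
  by have := in_set0 k; rewrite -FI0 inE kF kI.
rewrite !inE; case: (boolP (j \in I)) => jI; last by rewrite (subsetP subF) // inE jI.
have jk : j != k by apply: contraNneq kS => <-.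
by rewrite jk orbT.
Qed.

Section EssentialShifts.
Variables (d n : nat) (v : 'I_n -> 'I_d -> int) (Sigmap : {set {set 'I_n}}).
Variables (I : {set 'I_n}) (h l : 'I_n -> int).
Hypotheses (hL : in_L v h) (lL : in_L v l) (h_supp : forall j, (h j != 0) = (j \in I)).

Lemma in_L_shift (m : int) : in_L v (shift m h l).
Proof.
move=> i; under eq_bigr do rewrite mulrDl -mulrA.
by rewrite big_split /= -mulr_sumr hL lL mulr0 addr0.
Qed.

Lemma Ipos_subset : Ipos h \subset I.
Proof. by apply/subsetP=> j; rewrite inE -h_supp => /lt0r_neq0. Qed.

Lemma Ineg_subset : Ineg h \subset I.
Proof. by apply/subsetP=> j; rewrite inE -h_supp => /ltr0_neq0. Qed.

Lemma Supp_shift_setD (g g' : 'I_n -> rat) (m : int) : {in ~: I, g =1 g'} ->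
  Supp g (shift m h l) :\: I = Supp g' l :\: I.
Proof.
move=> gg'; apply/setP=> j; rewrite !inE /shift.
case: (boolP (j \in I)) => //= jI.
have /eqP -> : h j == 0 by rewrite -[_ == _]negbK h_supp.
by rewrite mulr0 add0r gg' // inE.
Qed.

Lemma separating_of_S_es (gamma : 'I_n -> rat) (k0 : int) :
  S_es v (essential Sigmap I h (Ipos h)) gamma (shift k0 h l) ->
  exists2 F0, separating Sigmap I h F0 & Supp gamma l :\: I \subset F0.
Proof.
move=> [_ [_ [[F0 [k [[FI0 sepF0] kpos ->]]] sub]]]; exists F0 => //.
move: sub; rewrite subset_setU_setD1 ?(subsetP Ipos_subset) // => /andP[].
by rewrite (@Supp_shift_setD _ gamma).
Qed.

Lemma S_es_essential_shift (P : {set 'I_n}) (g gamma : 'I_n -> rat)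
    (F0 : {set 'I_n}) (m : int) :
  separating Sigmap I h F0 -> Supp gamma l :\: I \subset F0 ->
  P \subset I -> {in ~: I, g =1 gamma} ->
  S_es v (essential Sigmap I h P) g (shift m h l) <-> hits_nat P h l g m.
Proof.
move=> sepF0 SuppF0 PI gg; split.
  move=> [_ [_ [[F [k [[FI0 _] kP ->]]] sub]]]; exists k => //.
  move: sub; rewrite subset_setU_setD1 ?(subsetP PI) // inE negbK.
  by case/andP.
move=> [k kP nat_k]; split; first exact: in_L_shift.
exists (F0 :|: (I :\ k)); split; first by exists F0, k.
rewrite subset_setU_setD1 ?(subsetP PI) ?(Supp_shift_setD _ gg) ?inE ?negbK ?nat_k ?andbT //.
by case: sepF0.
Qed.

End EssentialShifts.

Theorem proposition4p7
  (d n : nat) (v : 'I_n -> 'I_d -> int) (beta : 'I_d -> int)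
  (Sigmap Sigmam : {set {set 'I_n}}) (I : {set 'I_n}) (h : 'I_n -> int)
  (q gamma : 'I_n -> rat) (theta : rat) (l : 'I_n -> int) :
  injective v ->
  generates_lattice v ->
  has_height_one v ->
  regular_triangulation_fan v Sigmap ->
  regular_triangulation_fan v Sigmam ->
  is_circuit v I ->
  primitive_relation v I h ->
  flip Sigmap Sigmam I h ->
  (* v in Box(Sigma_+), with coefficients q = q^v, y^v_j = exp(2 pi i q_j) *)
  in_box v Sigmap q ->
  (* gamma = gamma^v : exp(2 pi i gamma_j) = y^v_j, sum gamma_j v_j = beta *)
  (forall j, gamma j - q j \is a Num.int) ->
  (forall i, combQ v gamma i = (beta i)%:~R) ->
  (* t = exp(2 pi i theta) lies in I(y^v); theta_1 = 0 *)
  (exists2 j, j \in Ineg h & q j + theta * (h j)%:~R \is a Num.int) ->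
  (theta \is a Num.int -> theta = 0) ->
  (* l in L with p(l) in p(S^es_+(gamma^v)) *)
  in_L v l ->
  (exists k : int, S_es v (essential Sigmap I h (Ipos h)) gamma (shift k h l)) ->
  let gamma_t := fun j => gamma j + theta * (h j)%:~R in
  (exists mp : int,
     is_least (fun m => exists2 j, j \in Ipos h &
                  (m * h j + l j)%:~R + gamma j \is a Num.nat) mp /\
     forall m : int,
       S_es v (essential Sigmap I h (Ipos h)) gamma (shift m h l) <-> mp <= m) /\
  (exists mm : int,
     is_greatest (fun m => exists2 j, j \in Ineg h &
                  (m * h j + l j)%:~R + gamma_t j \is a Num.nat) mm /\
     forall m : int,
       S_es v (essential Sigmap I h (Ineg h)) gamma_t (shift m h l) <-> m <= mm).
Proof.
move=> _ _ _ _ _ _ [hL h_supp _] _ _ gamma_q _ [j0 j0neg int_j0] _ lL [k0 S_k0] gamma_t.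
have [F0 sepF0 SuppF0] := separating_of_S_es h_supp S_k0.
have S_es_hits (P : {set 'I_n}) g m : P \subset I -> {in ~: I, g =1 gamma} ->
    S_es v (essential Sigmap I h P) g (shift m h l) <-> hits_nat P h l g m.
  by move=> PI gg; exact (S_es_essential_shift hL lL h_supp m sepF0 SuppF0 PI gg).
split.
  have hits_k0 : hits_nat (Ipos h) h l gamma k0.
    by apply/S_es_hits; rewrite ?Ipos_subset.
  have [|mp [least ray]] := hits_nat_ray _ hits_k0; first by move=> j; rewrite inE.
  by exists mp; split=> // m; rewrite S_es_hits ?Ipos_subset.
have gamma_t_off : {in ~: I, gamma_t =1 gamma}.
  by move=> j; rewrite inE -h_supp negbK => /eqP hj0; rewrite /gamma_t hj0 mulr0 addr0.
have neg_h_gt0 : {in Ineg h, forall j, 0 < - h j} by move=> j; rewrite inE oppr_gt0.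
have [m0 nat_m0] : exists m0 : int, (m0 * - h j0 + l j0)%:~R + gamma_t j0 \is a Num.nat.
  apply: natr_shift_exists (neg_h_gt0 j0 j0neg) _.
  have -> : (l j0)%:~R + gamma_t j0 = (l j0)%:~R + (gamma j0 - q j0) + (q j0 + theta * (h j0)%:~R).
    by rewrite /gamma_t; ring.
  by rewrite rpredD // rpredD ?intr_int ?gamma_q.
have [mp ray] := hits_nat_ray neg_h_gt0 (ex_intro2 _ _ j0 j0neg nat_m0).
have [greatest ray'] := is_greatest_opp (hits_nat_opp (Ineg h) h l gamma_t) ray.
by exists (- mp); split=> // m; rewrite S_es_hits ?Ineg_subset.
Qed.
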